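(* Let $G=(V,E)$ be a connected undirected graph with $n=|V|$ vertices and minimum degree $D$, let $\delta>0$, and let $T(n)$ be the $\delta$-mixing time of $G$. Consider a standard random walk on $G$. For any vertex $v$, any time index $j$, any integer $z \ge T(n)$ and any edge $e\in E$, the conditional probability, given that the walk is at vertex $v$ at time index $j$, that the walk traverses edge $e$ between time indices $j+z$ and $j+z+1$ lies between $\frac{1}{|E|} - \frac{2\delta}{D}$ and $\frac{1}{|E|}+\frac{2\delta}{D}$.
   Context: A standard random walk moves at each step to a uniformly random neighbor of the current vertex; its stationary distribution is $\mu(u)=d_u/(2|E|)$ with $d_u$ the degree of $u$. The $\delta$-mixing time is the smallest $t'$ such that, for every starting vertex, the distribution $\mu'$ of the walk's position after $t'$ steps satisfies $\|\mu-\mu'\|_\infty\le\delta$. The walk traverses edge $\{v_{i-1},v_i\}$ between time indices $i-1$ and $i$, where $v_i$ is its position at time $i$. *)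

From mathcomp Require Import all_boot all_order all_algebra.
Set Implicit Arguments. Unset Strict Implicit. Unset Printing Implicit Defensive.
Import Order.TTheory GRing.Theory Num.Theory.
Local Open Scope ring_scope.

(* A simple undirected graph on a finite vertex type V is given by a
   symmetric irreflexive adjacency relation adj. *)
Section RW.
Variables (R : realFieldType) (V : finType) (adj : rel V).

Definition deg (u : V) : nat := #|[set w | adj u w]|.

Definition edges : {set {set V}} :=
  [set [set uw.1; uw.2] | uw in [set uw : V * V | adj uw.1 uw.2]].

Definition trans (u w : V) : R := if adj u w then (deg u)%:R^-1 else 0.

Definition stat (u : V) : R := (deg u)%:R / (2 * #|edges|)%:R.

Definition pos (N : nat) (x : {ffun 'I_N.+1 -> V}) (k : nat) : V := x (inord k).

Definition path_prob (mu0 : V -> R) (N : nat) (x : {ffun 'I_N.+1 -> V}) : R :=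
  mu0 (pos x 0) * \prod_(i < N) trans (pos x i) (pos x i.+1).

Definition Pr (mu0 : V -> R) (N : nat) (A : {ffun 'I_N.+1 -> V} -> bool) : R :=
  \sum_(x : {ffun 'I_N.+1 -> V} | A x) path_prob mu0 x.

Definition dirac (v : V) : V -> R := fun u => (u == v)%:R.

Definition walk_dist (v : V) (t : nat) (u : V) : R :=
  Pr (dirac v) (fun x : {ffun 'I_t.+1 -> V} => pos x t == u).

Definition mixing_ok (delta : R) (t : nat) : Prop :=
  forall v u : V, `|stat u - walk_dist v t u| <= delta.

Definition is_mixing_time (delta : R) (T : nat) : Prop :=
  mixing_ok delta T /\ forall t, (t < T)%N -> ~ mixing_ok delta t.

Definition is_distribution (mu0 : V -> R) : Prop :=
  (forall u, 0 <= mu0 u) /\ \sum_u mu0 u = 1.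

End RW.

From mathcomp Require Import all_boot all_order all_algebra.
From mathcomp Require Import ring lra.
Import Order.TTheory GRing.Theory Num.Theory.
Local Open Scope ring_scope.
Set Implicit Arguments. Unset Strict Implicit.

(* By the Markov property the conditional probability is the probability that
   the walk started at v crosses e = {a, b} at step z, namely
   q_z(a)/d_a + q_z(b)/d_b with q_z the law of the walk after z steps.  Mixing
   persists after time T, since q_z is a mixture of the laws after T steps
   started anywhere; so |q_z(u) - d_u/(2|E|)| <= delta, and dividing by
   d_u >= D places each term within delta/D of 1/(2|E|). *)

Section PathSums.
Variables (R : realFieldType) (V : finType).

(* [W k u w] weighs the step u -> w taken between times k and k+1. *)
Fixpoint evolve (mu : V -> R) (W : nat -> V -> V -> R) (k : nat) : V -> R :=
  if k is k'.+1 then fun w => \sum_u evolve mu W k' u * W k' u w else mu.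

Lemma sum_paths_evolve N (mu : V -> R) (W : nat -> V -> V -> R) (g : V -> R) :
  \sum_(x : {ffun 'I_N.+1 -> V})
     (mu (pos x 0) * \prod_(i < N) W i (pos x i) (pos x i.+1)) * g (pos x N)
  = \sum_u evolve mu W N u * g u.
Proof.
elim: N g => [|N IH] g.
  rewrite (reindex (fun u : V => [ffun _ : 'I_1 => u])) /=; last first.
    exists (fun x : {ffun 'I_1 -> V} => x ord0) => [u _|x _]; first by rewrite ffunE.
    by apply/ffunP => i; rewrite ffunE (ord1 i).
  by apply: eq_bigr => u _; rewrite /pos !ffunE big_ord0 mulr1.
(* a path of length N+2 is a path of length N+1 followed by its last vertex *)
pose ext (p : {ffun 'I_N.+1 -> V} * V) :=
  [ffun i : 'I_N.+2 => if (i <= N)%N then p.1 (inord i) else p.2].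
have pos_ext_init y w k : (k <= N)%N -> pos (ext (y, w)) k = pos y k.
  by move=> kN; rewrite /pos ffunE /= inordK ?ltnS ?kN // leqW.
have pos_ext_last y w : pos (ext (y, w)) N.+1 = w.
  by rewrite /pos ffunE /= inordK // ltnn.
rewrite (reindex ext); last first.
  exists (fun x : {ffun 'I_N.+2 -> V} =>
    ([ffun k : 'I_N.+1 => x (inord k)], x (inord N.+1))).
    move=> [y w] _ /=; congr pair; last exact: pos_ext_last.
    apply/ffunP => k; rewrite ffunE.
    have := pos_ext_init y w k; rewrite /pos => ->; last by rewrite -ltnS.
    by congr (y _); apply: val_inj; rewrite /= inordK.
  move=> x _; apply/ffunP => i; rewrite ffunE /=.
  case: ifP => iN; rewrite ?ffunE; congr (x _); apply: val_inj.
    by rewrite /= !inordK // ltnS.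
  have := ltn_ord i; rewrite ltnS => i_le_N1.
  by rewrite /= inordK //; apply/eqP; rewrite eqn_leq i_le_N1 ltnNge iN.
rewrite -(pair_bigA _ (fun y w =>
   mu (pos (ext (y, w)) 0) *
   \prod_(i < N.+1) W i (pos (ext (y, w)) i) (pos (ext (y, w)) i.+1) *
   g (pos (ext (y, w)) N.+1))) /=.
transitivity (\sum_(y : {ffun 'I_N.+1 -> V})
   mu (pos y 0) * \prod_(i < N) W i (pos y i) (pos y i.+1) *
   (fun u => \sum_w W N u w * g w) (pos y N)).
  apply: eq_bigr => y _; rewrite mulr_sumr; apply: eq_bigr => w _.
  rewrite big_ord_recr /= pos_ext_init // pos_ext_last pos_ext_init //.
  rewrite (eq_bigr (fun i : 'I_N => W i (pos y i) (pos y i.+1))); last first.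
    by move=> i _; rewrite !pos_ext_init // ltnW.
  by rewrite !mulrA.
rewrite (IH (fun u => \sum_w W N u w * g w)) /=.
under eq_bigr do rewrite mulr_sumr.
rewrite exchange_big /=; apply: eq_bigr => w _.
by rewrite mulr_suml; apply: eq_bigr => u _; rewrite mulrA.
Qed.

Lemma prod_ord_if_eq N k (F : nat -> R) : (k < N)%N ->
  \prod_(i < N) (if (i : nat) == k then F i else 1) = F k.
Proof.
move=> kN; rewrite (bigD1 (Ordinal kN)) //= eqxx big1 ?mulr1 // => i.
by rewrite -val_eqE /= => /negbTE ->.
Qed.

Lemma sum_indicator_mul (f : V -> R) v : \sum_u (u == v)%:R * f u = f v.
Proof.
rewrite (bigD1 v) //= big1 ?eqxx ?mul1r ?addr0 // => u /negbTE ->.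
by rewrite mul0r.
Qed.

Lemma sum_indicator2_mul (F : V -> V -> R) a b :
  \sum_u \sum_w ((u == a) && (w == b))%:R * F u w = F a b.
Proof.
under eq_bigr do under eq_bigr do rewrite -mulnb natrM -mulrA.
by under eq_bigr do rewrite -mulr_sumr sum_indicator_mul; rewrite sum_indicator_mul.
Qed.

Lemma eq_set2 (u w a b : V) : u != w -> a != b ->
  ([set u; w] == [set a; b]) = ((u == a) && (w == b)) || ((u == b) && (w == a)).
Proof.
move=> uw ab; apply/idP/idP => [/eqP E|]; last first.
  by case/orP=> /andP[/eqP-> /eqP->] //; rewrite setUC.
have : w \in [set a; b] by rewrite -E set22.
have : u \in [set a; b] by rewrite -E set21.
rewrite !inE => /orP[]/eqP Hu /orP[]/eqP Hw; subst u w; rewrite ?eqxx ?orbT //;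
  by rewrite eqxx in uw.
Qed.

Lemma dist_ratio_le (x d c Dl dl : R) : 0 < Dl -> Dl <= d -> 0 < c -> 0 <= dl ->
  `|d / c - x| <= dl -> `|x / d - c^-1| <= dl / Dl.
Proof.
move=> Dl_gt0 Dl_le_d c_gt0 dl_ge0 H.
have d_gt0 : 0 < d by apply: lt_le_trans Dl_le_d.
have -> : x / d - c^-1 = (x - d / c) / d by field; rewrite !gt_eqF.
rewrite normrM (gtr0_norm (x := d^-1)) ?invr_gt0 // distrC.
apply: (le_trans (y := dl / d)); first by rewrite ler_wpM2r // invr_ge0 ltW.
by rewrite ler_wpM2l // lef_pV2 // posrE.
Qed.

End PathSums.

Section RandomWalk.
Variables (R : realFieldType) (V : finType) (adj : rel V).
Notation tr := (trans R adj).

Lemma Pr_evolve N (mu : V -> R) (A : {ffun 'I_N.+1 -> V} -> bool)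
  (W : nat -> V -> V -> R) (g : V -> R) :
  (forall x, (A x)%:R * path_prob adj mu x =
     mu (pos x 0) * \prod_(i < N) W (i : nat) (pos x i) (pos x i.+1) * g (pos x N)) ->
  Pr adj mu A = \sum_u evolve mu W N u * g u.
Proof.
move=> HA; rewrite -sum_paths_evolve /Pr big_mkcond /=; apply: eq_bigr => x _.
by rewrite -HA; case: (A x); rewrite ?mul1r ?mul0r.
Qed.

Definition walk_law (mu : V -> R) (t : nat) : V -> R := evolve mu (fun _ => tr) t.

Lemma walk_distE v t u : walk_dist R adj v t u = walk_law (dirac R v) t u.
Proof.
rewrite /walk_dist (Pr_evolve (W := fun _ => tr) (g := fun w => (w == u)%:R)).
  by under eq_bigr do rewrite mulrC; rewrite sum_indicator_mul.
by move=> x; rewrite /path_prob mulrC -mulrA.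
Qed.

Lemma walk_lawD mu s t u :
  walk_law mu (s + t) u = \sum_w walk_law mu s w * walk_law (dirac R w) t u.
Proof.
elim: t u => [|t IH] u.
  rewrite addn0 -[LHS](sum_indicator_mul (walk_law mu s) u).
  by apply: eq_bigr => w _; rewrite mulrC /walk_law /dirac /= eq_sym.
rewrite addnS /walk_law /= -/(walk_law mu (s + t)).
under eq_bigr do rewrite IH mulr_suml.
rewrite exchange_big /=; apply: eq_bigr => w _.
by rewrite mulr_sumr; apply: eq_bigr => x _; rewrite mulrA.
Qed.

Lemma trans_ge0 u w : 0 <= tr u w.
Proof. by rewrite /trans; case: ifP => // _; rewrite invr_ge0 ler0n. Qed.

Lemma sum_trans u : (0 < deg adj u)%N -> \sum_w tr u w = 1.
Proof.
move=> du; rewrite /trans -big_mkcond /= sumr_const.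
have -> : #|[pred w | adj u w]| = deg adj u by rewrite /deg cardsE.
have du_neq0 : (deg adj u)%:R != 0 :> R by rewrite pnatr_eq0 -lt0n.
by rewrite -[RHS](mulVf du_neq0) mulr_natr.
Qed.

Lemma walk_law_ge0 mu t u : (forall u, 0 <= mu u) -> 0 <= walk_law mu t u.
Proof.
move=> mu_ge0; elim: t u => [|t IH] u //=.
by apply: sumr_ge0 => w _; apply: mulr_ge0 (IH w) (trans_ge0 _ _).
Qed.

Hypothesis deg_gt0 : forall u, (0 < deg adj u)%N.

Lemma sum_walk_law mu t : \sum_u walk_law mu t u = \sum_u mu u.
Proof.
elim: t => [|t IH] //=; rewrite -IH exchange_big /=; apply: eq_bigr => u _.
by rewrite -mulr_sumr sum_trans // mulr1.
Qed.

Lemma sum_walk_law_dirac v t : \sum_u walk_law (dirac R v) t u = 1.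
Proof.
rewrite sum_walk_law -(sum_indicator_mul (fun _ => 1) v).
by apply: eq_bigr => u _; rewrite mulr1.
Qed.

Lemma mixing_ok_mono (dl : R) T z :
  mixing_ok adj dl T -> (T <= z)%N -> mixing_ok adj dl z.
Proof.
move=> mixT Tz v u; rewrite walk_distE -(subnK Tz) walk_lawD.
set q := walk_law (dirac R v) (z - T).
have q_ge0 w : 0 <= q w by apply: walk_law_ge0 => x; rewrite ler0n.
rewrite -[stat R adj u]mul1r -(sum_walk_law_dirac v (z - T)) mulr_suml -sumrB.
apply: le_trans (ler_norm_sum _ _ _) _.
rewrite -[dl]mul1r -(sum_walk_law_dirac v (z - T)) mulr_suml ler_sum // => w _.
by rewrite -mulrBr normrM ger0_norm // ler_wpM2l // -walk_distE.
Qed.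

(* The event {x_j = v} is recorded at step j and the predicate P on the
   (j+z)-th step, as 0/1 factors multiplied into the transition weights. *)
Definition marked_trans j z v (P : V -> V -> bool) (i : nat) (u w : V) : R :=
  (if i == j then (u == v)%:R else 1) * tr u w
  * (if i == j + z then (P u w)%:R else 1).

Lemma evolve_marked_early mu j z v P k u : (k <= j)%N ->
  evolve mu (marked_trans j z v P) k u = walk_law mu k u.
Proof.
elim: k u => [|k IH] u kj //=; apply: eq_bigr => w _.
rewrite IH ?(ltnW kj) // /marked_trans ltn_eqF // ltn_eqF ?mul1r ?mulr1 //.
exact: leq_trans kj (leq_addr _ _).
Qed.

Lemma evolve_marked mu j z v P m w : (m <= z)%N ->
  evolve mu (marked_trans j z v P) (j + m).+1 w = walk_law mu j v *
    \sum_u walk_law (dirac R v) m u * tr u w * (if m == z then (P u w)%:R else 1).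
Proof.
elim: m w => [|m IH] w mz.
  rewrite addn0 /=.
  under eq_bigr do rewrite evolve_marked_early // /marked_trans eqxx
    (mulrC (walk_law _ _ _)) -!mulrA.
  rewrite sum_indicator_mul.
  have -> : (j == j + z) = (0 == z) by rewrite -{1}(addn0 j) eqn_add2l.
  rewrite (eq_bigr (fun u =>
    (u == v)%:R * (tr u w * (if 0%N == z then (P u w)%:R else 1)))) => [|u _];
    last by rewrite mulrA.
  by rewrite sum_indicator_mul mulrA mulrC.
transitivity (\sum_u evolve mu (marked_trans j z v P) (j + m).+1 u *
                     marked_trans j z v P (j + m).+1 u w); first by rewrite addnS.
under eq_bigr do rewrite IH ?(ltnW mz) //.
rewrite ltn_eqF // /marked_trans gtn_eqF ?ltnS ?leq_addr // -addnS eqn_add2l.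
rewrite mulr_sumr; apply: eq_bigr => u _.
rewrite mul1r -mulrA; congr (_ * _); rewrite !mulrA; congr (_ * _ * _).
by apply: eq_bigr => x _; rewrite mulr1.
Qed.

Lemma Pr_marked mu j z v (P : V -> V -> bool) :
  Pr adj mu (fun x : {ffun 'I_(j + z).+2 -> V} =>
     (pos x j == v) && P (pos x (j + z)) (pos x (j + z).+1))
  = walk_law mu j v *
    \sum_u \sum_w walk_law (dirac R v) z u * tr u w * (P u w)%:R.
Proof.
rewrite (Pr_evolve (W := marked_trans j z v P) (g := fun _ => 1)); last first.
  move=> x; rewrite mulr1 /path_prob /marked_trans !big_split /=.
  rewrite (prod_ord_if_eq (fun i => (pos x i == v)%:R)) ?ltnS ?leq_addr //.
  rewrite (prod_ord_if_eq (fun i => (P (pos x i) (pos x i.+1))%:R)) //.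
  by rewrite -mulnb natrM; ring.
under eq_bigr do rewrite mulr1 evolve_marked // eqxx.
by rewrite -mulr_sumr exchange_big.
Qed.

Lemma Pr_pos mu j z v :
  Pr adj mu (fun x : {ffun 'I_(j + z).+2 -> V} => pos x j == v) = walk_law mu j v.
Proof.
transitivity (Pr adj mu (fun x : {ffun 'I_(j + z).+2 -> V} =>
   (pos x j == v) && (fun _ _ => true) (pos x (j + z)) (pos x (j + z).+1))).
  by apply: eq_bigl => x; rewrite andbT.
rewrite (Pr_marked mu j z v (fun _ _ => true)).
transitivity (walk_law mu j v * \sum_u walk_law (dirac R v) z u);
  last by rewrite sum_walk_law_dirac mulr1.
congr (_ * _); apply: eq_bigr => u _.
rewrite -[RHS]mulr1 -[in RHS](sum_trans (deg_gt0 u)) mulr_sumr.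
by apply: eq_bigr => w _; rewrite mulr1.
Qed.

End RandomWalk.

Lemma deg_gt0_connected (V : finType) (adj : rel V) a b :
  (forall u w, connect adj u w) -> adj a b -> forall u, (0 < deg adj u)%N.
Proof.
move=> conn hab u; apply/card_gt0P.
have [->|ua] := eqVneq u a; first by exists b; rewrite inE.
have /connectP [[|x p] /= path_p last_p] := conn u a.
  by rewrite last_p eqxx in ua.
by exists x; rewrite inE; case/andP: path_p.
Qed.

Lemma sum_edge_crossing (R : realFieldType) (V : finType) (adj : rel V)
  (adj_sym : symmetric adj) (adj_irr : irreflexive adj) (f : V -> R) a b :
  adj a b ->
  \sum_u \sum_w f u * trans R adj u w * ([set u; w] == [set a; b])%:R
  = f a / (deg adj a)%:R + f b / (deg adj b)%:R.
Proof.
move=> hab; have ab : a != b by apply: contraTneq hab => ->; rewrite adj_irr.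
transitivity (\sum_u \sum_w
   (((u == a) && (w == b))%:R * (f u * trans R adj u w) +
    ((u == b) && (w == a))%:R * (f u * trans R adj u w))).
  apply: eq_bigr => u _; apply: eq_bigr => w _.
  case huw : (adj u w); last by rewrite /trans huw !(mulr0, mul0r, addr0).
  have uw : u != w by apply: contraTneq huw => ->; rewrite adj_irr.
  rewrite -mulrDl mulrC eq_set2 //; congr (_ * _).
  have [->|_] := eqVneq u a; last by rewrite /= add0r.
  by rewrite (negbTE ab) /= orbF addr0.
under eq_bigr do rewrite big_split /=.
by rewrite big_split /= !sum_indicator2_mul /trans hab adj_sym hab.
Qed.

Theorem lemma1 (R : realFieldType) (V : finType) (adj : rel V)
  (adj_sym : symmetric adj) (adj_irr : irreflexive adj)
  (conn : forall u w : V, connect adj u w)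
  (D : nat) (hDmin : forall u : V, (D <= deg adj u)%N)
  (hDatt : exists u : V, deg adj u = D)
  (delta : R) (hdelta : 0 < delta)
  (T : nat) (hT : is_mixing_time adj delta T)
  (mu0 : V -> R) (hmu0 : is_distribution mu0)
  (v : V) (j z : nat) (hz : (T <= z)%N)
  (e : {set V}) (he : e \in edges adj)
  (hpos : 0 < Pr adj mu0 (fun x : {ffun 'I_(j + z).+2 -> V} => pos x j == v)) :
  let p :=
    Pr adj mu0 (fun x : {ffun 'I_(j + z).+2 -> V} =>
              (pos x j == v) && ([set pos x (j + z); pos x (j + z).+1] == e))
    / Pr adj mu0 (fun x : {ffun 'I_(j + z).+2 -> V} => pos x j == v) in
  (#|edges adj|%:R)^-1 - 2 * delta / D%:R <= p /\
  p <= (#|edges adj|%:R)^-1 + 2 * delta / D%:R.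
Proof.
move=> p; case/imsetP: (he) => [[a b]]; rewrite inE /= => hab Ee; subst e.
have deg_gt0 := deg_gt0_connected conn hab.
set q := walk_law adj (dirac R v) z.
have -> : p = q a / (deg adj a)%:R + q b / (deg adj b)%:R.
  rewrite /p (Pr_marked adj mu0 j z v (fun u w => [set u; w] == [set a; b])).
  rewrite (Pr_pos deg_gt0) sum_edge_crossing // mulrC mulKf // gt_eqF //.
  by rewrite -(Pr_pos deg_gt0 _ _ z).
have D_gt0 : 0 < D%:R :> R by case: hDatt => u <-; rewrite ltr0n.
have E_gt0 : 0 < (2 * #|edges adj|)%:R :> R.
  by rewrite ltr0n muln_gt0 card_gt0; apply/set0Pn; exists [set a; b].
have near u : `|q u / (deg adj u)%:R - (2 * #|edges adj|)%:R^-1| <= delta / D%:R.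
  apply: dist_ratio_le (ltW hdelta) _ => //; first by rewrite ler_nat.
  by have := mixing_ok_mono deg_gt0 hT.1 hz v u; rewrite walk_distE.
have -> : #|edges adj|%:R^-1 = 2 * (2 * #|edges adj|)%:R^-1 :> R.
  by rewrite natrM invfM mulrA mulfV ?mul1r // pnatr_eq0.
move: (near a) (near b); rewrite !ler_norml => /andP[? ?] /andP[? ?].
by rewrite -(mulrA 2 delta); split; lra.
Qed.
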